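(* For every $n\in\mathbb{N}$, $n\ge1$, and all $\Delta,\Delta'\in\mathcal{P}_n$ with $\Delta\not\equiv\Delta'$: $d_\Delta(i)=d_{\Delta'}(i)$ for every $i\in\mathbb{Z}_n$ if and only if $f^{(\Delta)}_{128,n}=f^{(\Delta')}_{128,n}$.
   Context: Cells are indexed by $\mathbb{Z}_n=\{0,\dots,n-1\}$, indices modulo $n$. Rule $128$ has local rule $r_{128}(x_1,x_2,x_3)=x_1\wedge x_2\wedge x_3$ and global function $f_{128,n}(x)_i=r_{128}(x_{i-1},x_i,x_{i+1})$. An update schedule is an ordered partition $\Delta=(\Delta_1,\dots,\Delta_k)$ of $\mathbb{Z}_n$ into nonempty blocks; $\mathcal{P}_n$ is the set of them. For a block $B$ let $f^{(B)}(x)_i=f_{128,n}(x)_i$ if $i\in B$ and $x_i$ otherwise; $f^{(\Delta)}_{128,n}=f^{(\Delta_k)}\circ\cdots\circ f^{(\Delta_1)}$. (The paper phrases equality of dynamics as equality of transition digraphs with arcs $(x,f^{(\Delta)}_{128,n}(x))$, equivalent to equality of maps.) For $u,v\in\mathbb{Z}_n$ with $u\in\Delta_a$, $v\in\Delta_b$, $lab_\Delta((u,v))=\oplus$ if $b\le a$ and $\ominus$ if $a<b$. Define $d^{\leftarrow}_\Delta(i)=\max\{k\in\mathbb{N}:\forall j,\,0<j<k\Rightarrow lab_\Delta((i-j,i-j+1))=\ominus\}$, $d^{\rightarrow}_\Delta(i)=\max\{k\in\mathbb{N}:\forall j,\,0<j<k\Rightarrow lab_\Delta((i+j,i+j-1))=\ominus\}$,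 and $d_\Delta(i)=\{i-k\bmod n:0\le k\le d^{\leftarrow}_\Delta(i)\}\cup\{i+k\bmod n:0\le k\le d^{\rightarrow}_\Delta(i)\}$. $\Delta\equiv\Delta'$ iff $lab_\Delta$ and $lab_{\Delta'}$ agree on every arc $(i,i+1)$ and $(i+1,i)$, $i\in\mathbb{Z}_n$. *)

From mathcomp Require Import all_boot.
Set Implicit Arguments. Unset Strict Implicit. Unset Printing Implicit Defensive.

(* Cells: 'I_n, with cyclic successor ordS (i+1 mod n) and predecessor
   ord_pred (i-1 mod n). Configurations: {ffun 'I_n -> bool}. *)
Definition config (n : nat) := {ffun 'I_n -> bool}.

Definition r128 (x1 x2 x3 : bool) : bool := [&& x1, x2 & x3].

Definition f128 (n : nat) (x : config n) : config n :=
  [ffun i : 'I_n => r128 (x (ord_pred i)) (x i) (x (ordS i))].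

Definition ordered_partition (n : nat) (D : seq {set 'I_n}) : Prop :=
  [/\ all (fun B : {set 'I_n} => B != set0) D,
      (forall u : 'I_n, has (fun B : {set 'I_n} => u \in B) D) &
      (forall a b, a < size D -> b < size D -> a != b ->
          [disjoint nth set0 D a & nth set0 D b])].

Definition fblock (n : nat) (B : {set 'I_n}) (x : config n) : config n :=
  [ffun i : 'I_n => if i \in B then f128 x i else x i].

Definition fsched (n : nat) (D : seq {set 'I_n}) (x : config n) : config n :=
  foldl (fun y B => fblock B y) x D.

Definition blk (n : nat) (D : seq {set 'I_n}) (u : 'I_n) : nat :=
  find (fun B : {set 'I_n} => u \in B) D.

(* lab_Delta((u,v)) : true = (+) (b <= a), false = (-) (a < b),
   where u in Delta_a, v in Delta_b *)
Definition lab (n : nat) (D : seq {set 'I_n}) (u v : 'I_n) : bool :=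
  blk D v <= blk D u.

Definition minus_k (n : nat) (i : 'I_n) (k : nat) : 'I_n := iter k (@ord_pred n) i.
Definition plus_k (n : nat) (i : 'I_n) (k : nat) : 'I_n := iter k (@ordS n) i.

Definition okleft (n : nat) (D : seq {set 'I_n}) (i : 'I_n) (k : nat) : bool :=
  [forall j : 'I_k, (0 < j) ==> ~~ lab D (minus_k i j) (ordS (minus_k i j))].
Definition okright (n : nat) (D : seq {set 'I_n}) (i : 'I_n) (k : nat) : bool :=
  [forall j : 'I_k, (0 < j) ==> ~~ lab D (plus_k i j) (ord_pred (plus_k i j))].

(* d^<-(i) and d^->(i): the maximum k in N satisfying okleft/okright.
   okleft/okright are downward closed and fail for k = n+1 on an ordered
   partition (a cyclic chain of strict block-index increases is impossible),
   so the maximum over k <= n is the maximum over all of N. *)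
Definition dleft (n : nat) (D : seq {set 'I_n}) (i : 'I_n) : nat :=
  \max_(k < n.+1 | okleft D i k) k.
Definition dright (n : nat) (D : seq {set 'I_n}) (i : 'I_n) : nat :=
  \max_(k < n.+1 | okright D i k) k.

Definition dset (n : nat) (D : seq {set 'I_n}) (i : 'I_n) : {set 'I_n} :=
  [set j | [exists k : 'I_(dleft D i).+1, j == minus_k i k]]
  :|: [set j | [exists k : 'I_(dright D i).+1, j == plus_k i k]].

Definition sched_equiv (n : nat) (D D' : seq {set 'I_n}) : Prop :=
  forall i : 'I_n, lab D i (ordS i) = lab D' i (ordS i) /\
                   lab D (ordS i) i = lab D' (ordS i) i.

From mathcomp Require Import all_boot.
Set Implicit Arguments. Unset Strict Implicit. Unset Printing Implicit Defensive.

(* When cell u is updated, it reads each neighbour v either before v is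
   updated (if v's block does not come earlier) or after it, in which case
   v's new value has itself been computed from its own neighbours.  Since
   rule 128 is a conjunction, unfolding these reads shows that the new value
   at u is the conjunction of the initial values over the maximal runs of
   strictly decreasing block indices leaving u to the left and to the right,
   which is d_Delta(u).  So f^(Delta) is determined by the sets d_Delta(u);
   conversely d_Delta(u) is the set of cells j whose single 0 switches the
   value at u off. *)

Section Conjunctions.
Variable n : nat.

Definition conj_on (S : {set 'I_n}) (x : config n) := [forall (j | j \in S), x j].

Lemma conj_onU A B x : conj_on (A :|: B) x = conj_on A x && conj_on B x.
Proof.
apply/forall_inP/andP => [H|[/forall_inP HA /forall_inP HB] j].
  by split; apply/forall_inP => j Hj; apply: H; rewrite inE Hj ?orbT.
by rewrite inE => /orP[]; auto.
Qed.

Lemma conj_on1 u A x : conj_on (u |: A) x = x u && conj_on A x.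
Proof.
rewrite conj_onU; congr andb.
apply/forall_inP/idP => [H|H j]; first by apply: H; rewrite inE.
by rewrite inE => /eqP ->.
Qed.

Lemma conj_on0 x : conj_on set0 x.
Proof. by apply/forall_inP => j; rewrite inE. Qed.

Lemma conj_on_neq S j : conj_on S [ffun k => k != j] = (j \notin S).
Proof.
apply/forall_inP/idP => [H|H k Hk].
  by apply/negP => Hj; have := H _ Hj; rewrite ffunE eqxx.
by rewrite ffunE; apply/eqP => e; rewrite -e Hk in H.
Qed.

End Conjunctions.

Section Schedule.
Variables (n : nat) (D : seq {set 'I_n}).
Hypothesis HD : ordered_partition D.

Lemma blk_ltsize u : blk D u < size D.
Proof. by case: HD => _ H _; rewrite /blk -has_find. Qed.

Lemma mem_nth_blk u : u \in nth set0 D (blk D u).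
Proof. by case: HD => _ H _; apply: (nth_find set0 (H u)). Qed.

Lemma notin_nth_blk t u : t < size D -> t != blk D u -> u \notin nth set0 D t.
Proof.
case: HD => _ _ H tD ne; apply/negP => Hu.
have := H t (blk D u) tD (blk_ltsize u) ne.
by move/disjointFl => /(_ _ (mem_nth_blk u)); rewrite Hu.
Qed.

Definition partial_sched t x := foldl (fun y B => fblock B y) x (take t D).

Lemma partial_schedS t x : t < size D ->
  partial_sched t.+1 x = fblock (nth set0 D t) (partial_sched t x).
Proof. by move=> tD; rewrite /partial_sched (take_nth set0 tD) foldl_rcons. Qed.

Definition updated x u := f128 (partial_sched (blk D u) x) u.

Lemma partial_schedE t x u : t <= size D ->
  partial_sched t x u = if t <= blk D u then x u else updated x u.
Proof.
elim: t => [|t IH] tD; first by rewrite /partial_sched take0.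
rewrite partial_schedS // ffunE.
have tD' : t <= size D by apply: ltnW.
case: (ltngtP t (blk D u)) => [lt|gt|->]; last by rewrite mem_nth_blk.
- by rewrite (negbTE (notin_nth_blk tD _)) ?IH ?(ltnW lt) ?lt // neq_ltn lt.
- rewrite (negbTE (notin_nth_blk tD _)) ?IH //; last by rewrite neq_ltn gt orbT.
  by rewrite leqNgt gt.
Qed.

Lemma fsched_updated x u : fsched D x u = updated x u.
Proof.
have -> : fsched D x = partial_sched (size D) x by rewrite /partial_sched take_size.
by rewrite partial_schedE // leqNgt blk_ltsize.
Qed.

Definition input_from (s : 'I_n -> 'I_n) (x : config n) u :=
  if blk D u <= blk D (s u) then x (s u) else updated x (s u).

Lemma updatedE x u :
  updated x u = [&& input_from (@ord_pred n) x u, x u & input_from (@ordS n) x u].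
Proof.
by rewrite {1}/updated /f128 ffunE /r128 !partial_schedE ?leqnn // ltnW ?blk_ltsize.
Qed.

End Schedule.

Lemma iter_cancel T (s s' : T -> T) k y : cancel s s' -> iter k s' (iter k s y) = y.
Proof. by move=> Hc; elim: k => // k IH; rewrite iterSr iterS Hc. Qed.

Section Chains.
Variables (n : nat) (D : seq {set 'I_n}) (s s' : 'I_n -> 'I_n).

Definition descending i k :=
  [forall j : 'I_k, (0 < j) ==> ~~ lab D (iter j s i) (s' (iter j s i))].

Lemma descendingP i k : reflect
  (forall j, 0 < j < k -> ~~ lab D (iter j s i) (s' (iter j s i)))
  (descending i k).
Proof.
apply: (iffP forallP) => H j.
  by move=> /andP[j0 jk]; have := H (Ordinal jk); rewrite /= j0.
by apply/implyP => j0; apply: H; rewrite j0 ltn_ord.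
Qed.

Lemma descending_le i k k' : k' <= k -> descending i k -> descending i k'.
Proof.
move=> le /descendingP H; apply/descendingP => j /andP[j0 jk]; apply: H.
by rewrite j0 (leq_trans jk le).
Qed.

Lemma descending0 i : descending i 0.
Proof. by apply/descendingP => j /andP[_]. Qed.

Lemma descending1 i : descending i 1.
Proof. by apply/descendingP => -[|j] /andP[]. Qed.

Definition chain i :=
  [set j | [exists k : 'I_n.+1, descending i k && (j == iter k s i)]].

Lemma max_chainE i :
  [set j | [exists k : 'I_(\max_(k < n.+1 | descending i k) k).+1, j == iter k s i]]
  = chain i.
Proof.
rewrite (bigmax_eq_arg ord0) ?descending0 //; case: arg_maxnP; first exact: descending0.
move=> m descm maxm; apply/setP => j; rewrite !inE.
apply/existsP/existsP => [[k /eqP->]|[k /andP[desck /eqP->]]].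
  have kn : k < n.+1 by apply: leq_ltn_trans (ltn_ord m); rewrite -ltnS.
  by exists (Ordinal kn); rewrite /= eqxx andbT (descending_le _ descm) // -ltnS.
have kn : k < (nat_of_ord m).+1 by rewrite ltnS; apply: maxm.
by exists (Ordinal kn); rewrite /= eqxx.
Qed.

Hypothesis Hc : cancel s s'.
Hypothesis Hn : forall y, iter n s y = y.

Lemma descendingSS i k :
  descending i k.+2 = (blk D (s i) < blk D i) && descending (s i) k.+1.
Proof.
have first_step : ~~ lab D (iter 1 s i) (s' (iter 1 s i)) = (blk D (s i) < blk D i).
  by rewrite /= Hc /lab -ltnNge.
apply/descendingP/andP => [H|[c /descendingP H] [|[|j]] /andP[// _ jk]].
- rewrite -first_step; split; first exact: H.
  by apply/descendingP => j /andP[j0 jk]; rewrite -iterSr; apply: H.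
- by rewrite first_step.
- by rewrite iterSr; apply: H.
Qed.

Lemma chainE i : chain i =
  i |: (s i |: (if blk D (s i) < blk D i then chain (s i) else set0)).
Proof.
have k1 : 1 < n.+1 by rewrite ltnS (leq_ltn_trans _ (ltn_ord i)).
apply/setP => j; rewrite !inE; apply/existsP/idP.
  case=> -[[|[|k]] kn] /= /andP[desck /eqP ->]; rewrite ?eqxx ?orbT //.
  move: desck; rewrite descendingSS => /andP[c desck]; rewrite c inE.
  apply/orP; right; apply/orP; right; apply/existsP.
  by exists (Ordinal (ltnW kn)); rewrite /= desck; apply/eqP; rewrite -iterSr.
case/orP => [/eqP->|]; first by exists ord0; rewrite /= descending0 eqxx.
case/orP => [/eqP->|]; first by exists (Ordinal k1); rewrite /= descending1 eqxx.
case: ifP => c; last by rewrite inE.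
rewrite inE => /existsP[[[|k] kn] /andP[desck /eqP->]].
  by exists (Ordinal k1); rewrite /= descending1 eqxx.
case: (ltnP k.+1 n) => kn'.
  exists (Ordinal (kn' : k.+2 < n.+1)).
  by rewrite /= descendingSS c desck; apply/eqP; rewrite -iterSr.
(* the run has wrapped around the whole ring and is back at s i *)
have -> : iter k.+1 s (s i) = s i.
  by rewrite (_ : k.+1 = n) ?Hn //; apply/anti_leq; rewrite kn' andbT -ltnS.
by exists (Ordinal k1); rewrite /= descending1 eqxx.
Qed.

End Chains.

Lemma iter_ordS_n n (y : 'I_n) : iter n (@ordS n) y = y.
Proof.
have iter_ordSE k : val (iter k (@ordS n) y) = (y + k) %% n.
  elim: k => [|k IH] /=; first by rewrite addn0 modn_small.
  by rewrite IH addnS -[((y + k) %% n).+1]addn1 modnDml addn1.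
by apply: val_inj; rewrite iter_ordSE modnDr modn_small.
Qed.

Lemma iter_ord_pred_n n (y : 'I_n) : iter n (@ord_pred n) y = y.
Proof. by rewrite -{1}(iter_ordS_n y) iter_cancel //; apply: ordSK. Qed.

Lemma input_fromE n (D : seq {set 'I_n}) (s s' : 'I_n -> 'I_n) x u :
  cancel s s' -> cancel s' s ->
  (forall y, iter n s y = y) -> (forall y, iter n s' y = y) ->
  (blk D (s u) < blk D u -> updated D x (s u) =
     conj_on (chain D s s' (s u)) x && conj_on (chain D s' s (s u)) x) ->
  input_from D s x u && x u = conj_on (chain D s s' u) x.
Proof.
move=> Hss' Hs's Hn Hn' IH; rewrite /input_from (chainE D Hss' Hn) !conj_on1.
case: leqP => c; first by rewrite conj_on0 andbT andbC.
rewrite IH // (chainE D Hs's Hn') Hss' ltnNge (ltnW c) /= !conj_on1 conj_on0.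
by case: (x u); case: (x (s u)); rewrite ?andbT ?andbF.
Qed.

Lemma updated_conj_chains n (D : seq {set 'I_n}) x u : ordered_partition D ->
  updated D x u = conj_on (chain D (@ord_pred n) (@ordS n) u) x
               && conj_on (chain D (@ordS n) (@ord_pred n) u) x.
Proof.
move=> HD; have [m] := ubnP (blk D u); elim: m u => // m IH u /= um.
have IHlt v : blk D v < blk D u -> updated D x v =
    conj_on (chain D (@ord_pred n) (@ordS n) v) x
    && conj_on (chain D (@ordS n) (@ord_pred n) v) x.
  by move=> lt; apply: IH; apply: leq_trans lt _.
have Pn := @iter_ord_pred_n n; have Sn := @iter_ordS_n n.
rewrite updatedE // -(input_fromE (u := u) (@ord_predK n) (@ordSK n) Pn Sn (IHlt _)).
rewrite -(input_fromE (u := u) (@ordSK n) (@ord_predK n) Sn Pn); last first.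
  by move=> lt; rewrite andbC; apply: IHlt.
by case: (x u); rewrite ?andbT ?andbF.
Qed.

Lemma fsched_conj_dset n (D : seq {set 'I_n}) x u :
  ordered_partition D -> fsched D x u = conj_on (dset D u) x.
Proof.
move=> HD; rewrite fsched_updated // updated_conj_chains // /dset conj_onU.
by rewrite -(max_chainE D (@ord_pred n) (@ordS n)) -(max_chainE D (@ordS n) (@ord_pred n)).
Qed.

Theorem mainTheorem17 (n : nat) (D D' : seq {set 'I_n}) :
  0 < n -> ordered_partition D -> ordered_partition D' ->
  ~ sched_equiv D D' ->
  ((forall i : 'I_n, dset D i = dset D' i) <->
   (forall x : config n, fsched D x = fsched D' x)).
Proof.
move=> _ HD HD' _; split => [same_dset x | same_fsched i].
  by apply/ffunP => u; rewrite !fsched_conj_dset // same_dset.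
apply/setP => j; apply/negb_inj.
by rewrite -!conj_on_neq -!fsched_conj_dset // same_fsched.
Qed.
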